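(* Suppose the joint distribution of $(Y,X,W_1)$ is known, $\operatorname{cov}(W_1,X)\ne 0$, normalize $\operatorname{var}(X)=1$, $\operatorname{var}(W_1)=I_{d_1}$, $\operatorname{var}(W_2)=1$, suppose $\sigma_{W_1,Y}$ and $\sigma_{W_1,X}$ are linearly independent and $d_1\ge 2$. Let $\underline b\in\mathbb R$, $\bar r_X\ge0$, $[\underline c,\bar c]\subseteq[0,1]$, and define $\bar r_Y^{\text{bf}}(\bar r_X,\underline c,\bar c,\underline b)=\inf\{\bar r_Y\ge 0: b\in\mathcal B_I(\bar r_X,\bar r_Y,\underline c,\bar c)\text{ for some } b\le\underline b\}$. Let $\underline B(\bar r_X,\underline c,\bar c)=\inf\mathcal B_I(\bar r_X,\underline c,\bar c)$. Then: (1) If $\underline b\ge\beta_{\text{med}}$, then $\bar r_Y^{\text{bf}}=0$. (2) If $\underline B(\bar r_X,\underline c,\bar c)>\underline b$, then $\bar r_Y^{\text{bf}}=+\infty$. (3) If $\underline B(\bar r_X,\underline c,\bar c)\le\underline b<\beta_{\text{med}}$, then $\bar r_Y^{\text{bf}}(\bar r_X,\underline c,\bar c,\underline b)$ equals the infimum of $\underline r_Y(z,c_1\sigma_{W_1,Y}+c_2\sigma_{W_1,X},b)$ over $(z,c_1,c_2,b)\in(-\sqrt{k_0},\sqrt{k_0})\times\mathbb R\times\mathbb R\times(-\infty,\underline b]$ subject to $p(z,c_1\sigma_{W_1,Y}+c_2\sigma_{W_1,X};\bar r_X)\ge0$, $(b-\beta_{\text{med}})^2<\text{devsq}(z)$,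 and $\|c_1\sigma_{W_1,Y}+c_2\sigma_{W_1,X}\|\in[\underline c,\bar c]\cap[0,1)$.
   Context: Let $(Y,X,W_1,W_2)$ be a random vector with finite second moments, $Y,X\in\mathbb R$, $W_1\in\mathbb R^{d_1}$, $W_2\in\mathbb R$. For random vectors $A,B$ with $\operatorname{var}(B)$ invertible, $A^{\perp B}=A-\operatorname{cov}(A,B)\operatorname{var}(B)^{-1}B$. $\beta_{\text{long}},\gamma_1,\gamma_2$: coefficients on $X,W_1,W_2$ in the linear projection of $Y$ on $(1,X,W_1,W_2)$; $\pi_1,\pi_2$: coefficients on $W_1,W_2$ in the linear projection of $X$ on $(1,W_1,W_2)$; $\beta_{\text{med}}$: coefficient on $X$ in the linear projection of $Y$ on $(1,X,W_1)$. $\sigma_{A,B}=\operatorname{cov}(A,B)$; $\Sigma_{\text{obs}}=\operatorname{var}(W_1)$; $c=\operatorname{cov}(W_1,W_2)$; $R_{W_2\sim W_1}=\sqrt{c'\Sigma_{\text{obs}}^{-1}c/\operatorname{var}(W_2)}$. $k_0=\operatorname{var}(X^{\perp W_1})$, $k_1=\operatorname{cov}(Y^{\perp W_1},X^{\perp W_1})$ (so $\beta_{\text{med}}=k_1/k_0$). Assumptions: (A1) $\operatorname{var}(Y,X,W_1,W_2)$ positive definite; (A-rx) $\sqrt{\operatorname{var}(\pi_2W_2)}\le\bar r_X\sqrt{\operatorname{var}(\pi_1'W_1)}$; (A-ry) $\sqrt{\operatorname{var}(\gamma_2W_2)}\le\bar r_Y\sqrt{\operatorname{var}(\gamma_1'W_1)}$;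 (A-c) $R_{W_2\sim W_1}\in[\underline c,\bar c]$. $\mathcal B_I(\bar r_X,\bar r_Y,\underline c,\bar c)$ is the set of $b$ for which there is a random vector $(\tilde Y,\tilde X,\tilde W_1,\tilde W_2)$ with $(\tilde Y,\tilde X,\tilde W_1)\overset{d}{=}(Y,X,W_1)$, $\tilde W_2$ scalar with variance 1, satisfying (A1), (A-rx), (A-ry), (A-c), with $\beta_{\text{long}}=b$; $\mathcal B_I(\bar r_X,\underline c,\bar c)$ is the same without (A-ry). Functions: $\text{devsq}(z)=\frac{\operatorname{var}(Y^{\perp X,W_1})}{k_0}\frac{z^2}{k_0-z^2}$; $p(z,c;\bar r_X)=\bar r_X^2\|\sigma_{W_1,X}\sqrt{1-\|c\|^2}-zc\|^2-z^2$; for $z\in\mathbb R$, $\|c\|<1$, $b\in\mathbb R$, let $v(z,c,b)=z\sqrt{1-\|c\|^2}(\sigma_{W_1,Y}-b\sigma_{W_1,X})-(k_1-bk_0)c$, and $\underline r_Y(z,c,b)=|k_1-bk_0|/\|v(z,c,b)\|$ if $v(z,c,b)\neq0$, $\underline r_Y(z,c,b)=+\infty$ if $v(z,c,b)=0$ (and $b\ne\beta_{\text{med}}$). *)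

From HB Require Import structures.
From mathcomp Require Import all_boot all_order all_algebra.
From mathcomp Require Import all_classical all_reals all_analysis.

Set Implicit Arguments.
Unset Strict Implicit.
Unset Printing Implicit Defensive.

Import Order.TTheory GRing.Theory Num.Theory.
Local Open Scope ring_scope.

Section OVB.
Variables (R : realType) (d : nat).

(* Second moments of the observed vector (Y, X, W1). *)
Record obsmom := Obs {
  vY : R;            (* var(Y) *)
  vX : R;            (* var(X) *)
  cXY : R;           (* cov(X,Y) *)
  sWY : 'cV[R]_d;    (* sigma_{W1,Y} = cov(W1,Y) *)
  sWX : 'cV[R]_d;    (* sigma_{W1,X} = cov(W1,X) *)
  SW : 'M[R]_d       (* Sigma_obs = var(W1) *)
}.

(* Second moments involving the unobserved scalar W2. *)
Record extmom := Ext {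
  sY2 : R;           (* cov(Y,W2) *)
  sX2 : R;           (* cov(X,W2) *)
  cW : 'cV[R]_d;     (* c = cov(W1,W2) *)
  v2 : R             (* var(W2) *)
}.

Definition qf n (a : 'cV[R]_n) (M : 'M[R]_n) (b : 'cV[R]_n) : R := (a^T *m M *m b) 0 0.
Definition nrm2 n (a : 'cV[R]_n) : R := (a^T *m a) 0 0.
Definition nrm n (a : 'cV[R]_n) : R := Num.sqrt (nrm2 a).

Definition posdef n (M : 'M[R]_n) : Prop :=
  M^T = M /\ forall v : 'cV[R]_n, v != 0 -> 0 < qf v M v.

(* linear-projection coefficients (on the non-constant regressors) *)
Definition lpcoef n (V : 'M[R]_n) (s : 'cV[R]_n) : 'cV[R]_n := invmx V *m s.

Definition obscov (o : obsmom) : 'M[R]_(1 + (1 + d)) :=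
  block_mx (vY o)%:M (row_mx (cXY o)%:M (sWY o)^T)
           (col_mx (cXY o)%:M (sWY o))
           (block_mx (vX o)%:M (sWX o)^T (sWX o) (SW o)).

Definition wcov (o : obsmom) (e : extmom) : 'M[R]_(d + 1) :=
  block_mx (SW o) (cW e) (cW e)^T (v2 e)%:M.
Definition wXcov (o : obsmom) (e : extmom) : 'cV[R]_(d + 1) :=
  col_mx (sWX o) (sX2 e)%:M.
Definition regcov (o : obsmom) (e : extmom) : 'M[R]_(1 + (d + 1)) :=
  block_mx (vX o)%:M (wXcov o e)^T (wXcov o e) (wcov o e).
Definition regYcov (o : obsmom) (e : extmom) : 'cV[R]_(1 + (d + 1)) :=
  col_mx (cXY o)%:M (col_mx (sWY o) (sY2 e)%:M).
Definition fullcov (o : obsmom) (e : extmom) : 'M[R]_(1 + (1 + (d + 1))) :=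
  block_mx (vY o)%:M (regYcov o e)^T (regYcov o e) (regcov o e).

(* projection of Y on (1, X, W1, W2) *)
Definition longcoef o e := lpcoef (regcov o e) (regYcov o e).
Definition beta_long o e : R := (usubmx (longcoef o e)) 0 0.
Definition gamma1 o e : 'cV[R]_d := usubmx (dsubmx (longcoef o e)).
Definition gamma2 o e : R := (dsubmx (dsubmx (longcoef o e))) 0 0.
(* projection of X on (1, W1, W2) *)
Definition picoef o e := lpcoef (wcov o e) (wXcov o e).
Definition pi1 o e : 'cV[R]_d := usubmx (picoef o e).
Definition pi2 o e : R := (dsubmx (picoef o e)) 0 0.

Definition RW2W1 o e : R := Num.sqrt (qf (cW e) (invmx (SW o)) (cW e) / v2 e).

Definition A_rx o e (rX : R) : Prop :=
  Num.sqrt ((pi2 o e) ^+ 2 * v2 e) <= rX * Num.sqrt (qf (pi1 o e) (SW o) (pi1 o e)).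
Definition A_ry o e (rY : R) : Prop :=
  Num.sqrt ((gamma2 o e) ^+ 2 * v2 e) <= rY * Num.sqrt (qf (gamma1 o e) (SW o) (gamma1 o e)).
Definition A_c o e (cl cu : R) : Prop := cl <= RW2W1 o e <= cu.

Definition BI (o : obsmom) (rX rY cl cu : R) : set R :=
  [set b | exists e : extmom, v2 e = 1 /\ posdef (fullcov o e) /\
     A_rx o e rX /\ A_ry o e rY /\ A_c o e cl cu /\ beta_long o e = b].
Definition BI_x (o : obsmom) (rX cl cu : R) : set R :=
  [set b | exists e : extmom, v2 e = 1 /\ posdef (fullcov o e) /\
     A_rx o e rX /\ A_c o e cl cu /\ beta_long o e = b].

Definition xwcov (o : obsmom) : 'M[R]_(1 + d) :=
  block_mx (vX o)%:M (sWX o)^T (sWX o) (SW o).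
Definition xwYcov (o : obsmom) : 'cV[R]_(1 + d) := col_mx (cXY o)%:M (sWY o).
(* coefficient on X in the projection of Y on (1, X, W1) *)
Definition beta_med o : R := (usubmx (lpcoef (xwcov o) (xwYcov o))) 0 0.
Definition k0 o : R := vX o - qf (sWX o) (invmx (SW o)) (sWX o).
Definition k1 o : R := cXY o - qf (sWX o) (invmx (SW o)) (sWY o).
Definition varYperp o : R := vY o - qf (xwYcov o) (invmx (xwcov o)) (xwYcov o).

Definition devsq o (z : R) : R := varYperp o / k0 o * (z ^+ 2 / (k0 o - z ^+ 2)).
Definition pfun o (z : R) (c : 'cV[R]_d) (rX : R) : R :=
  rX ^+ 2 * nrm2 (Num.sqrt (1 - nrm c ^+ 2) *: sWX o - z *: c) - z ^+ 2.
Definition vfun o (z : R) (c : 'cV[R]_d) (b : R) : 'cV[R]_d :=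
  (z * Num.sqrt (1 - nrm c ^+ 2)) *: (sWY o - b *: sWX o) - (k1 o - b * k0 o) *: c.
Definition rY_low o (z : R) (c : 'cV[R]_d) (b : R) : \bar R :=
  if vfun o z c b != 0 then (`|k1 o - b * k0 o| / nrm (vfun o z c b))%:E else +oo%E.

Definition rY_bf o (rX cl cu bl : R) : \bar R :=
  ereal_inf [set (r%:E)%E | r in [set r : R | 0 <= r /\ exists b, b <= bl /\ BI o rX r cl cu b]].
Definition B_low o (rX cl cu : R) : \bar R :=
  ereal_inf [set (b%:E)%E | b in BI_x o rX cl cu].

Definition rY_opt o (rX cl cu bl : R) : \bar R :=
  ereal_inf [set x : \bar R | exists z c1 c2 b : R,
     let c := c1 *: sWY o + c2 *: sWX o in
     [/\ - Num.sqrt (k0 o) < z < Num.sqrt (k0 o), b <= bl,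
         0 <= pfun o z c rX, (b - beta_med o) ^+ 2 < devsq o z &
         [/\ cl <= nrm c <= cu, nrm c < 1 & x = rY_low o z c b]]].

End OVB.

(** With [var W2 = 1], the unobserved [W2] is described by [c = cov(W1, W2)] and
    by the covariances [z] and [y] of [X] and [Y] with the standardized residual of
    [W2] on [W1].  The covariance matrix of [(Y, X, W1, W2)] is positive definite
    iff [|c| < 1], [z^2 < k0] and the residual variance of [Y] is positive, which
    for [z != 0] amounts to [(beta_long - beta_med)^2 < devsq z]; then
    [beta_long = (k1 - z y)/(k0 - z^2)], and (A-rx), (A-ry), (A-c) read
    [p(z, c) >= 0], [r_Y >= r_Y_low(z, c, beta_long)] and [cl <= |c| <= cu].
    Solving [beta_long = b] for [y] turns the breakdown frontier into the
    optimization over [(z, c, b)].  Finally [c] may be taken in the span of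
    [sigma_{W1,Y}] and [sigma_{W1,X}]: inside that plane one can keep [|c|] and
    [<sigma_{W1,X}, c>] (hence (A-rx) and (A-c)) while moving [<sigma_{W1,Y}, c>]
    in the direction that can only increase [|v|]. *)

From HB Require Import structures.
From mathcomp Require Import all_boot all_order all_algebra.
From mathcomp Require Import all_classical all_reals all_analysis.
From mathcomp Require Import ring lra.
Import Order.TTheory GRing.Theory Num.Theory.
Local Open Scope ring_scope.
Set Implicit Arguments.
Unset Strict Implicit.
Unset Printing Implicit Defensive.

(** * Euclidean geometry of column vectors *)

Section Dot.
Variable R : realFieldType.

Definition dot n (u v : 'cV[R]_n) : R := (u^T *m v) 0 0.

Lemma dotE n (u v : 'cV[R]_n) : dot u v = \sum_i u i 0 * v i 0.
Proof. by rewrite /dot !mxE; apply: eq_bigr => i _; rewrite mxE. Qed.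

Lemma dotC n (u v : 'cV[R]_n) : dot u v = dot v u.
Proof. by rewrite !dotE; apply: eq_bigr => i _; rewrite mulrC. Qed.

Lemma dotDl n (u w v : 'cV[R]_n) : dot (u + w) v = dot u v + dot w v.
Proof. by rewrite !dotE -big_split; apply: eq_bigr => i _; rewrite mxE mulrDl. Qed.

Lemma dotDr n (u w v : 'cV[R]_n) : dot v (u + w) = dot v u + dot v w.
Proof. by rewrite dotC dotDl !(dotC v). Qed.

Lemma dotZl n k (u v : 'cV[R]_n) : dot (k *: u) v = k * dot u v.
Proof. by rewrite !dotE mulr_sumr; apply: eq_bigr => i _; rewrite mxE mulrA. Qed.

Lemma dotZr n k (u v : 'cV[R]_n) : dot v (k *: u) = k * dot v u.
Proof. by rewrite dotC dotZl dotC. Qed.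

Lemma dotNl n (u v : 'cV[R]_n) : dot (- u) v = - dot u v.
Proof. by rewrite -scaleN1r dotZl mulN1r. Qed.

Lemma dotNr n (u v : 'cV[R]_n) : dot v (- u) = - dot v u.
Proof. by rewrite dotC dotNl dotC. Qed.

Lemma dot0l n (v : 'cV[R]_n) : dot 0 v = 0.
Proof. by rewrite dotE big1 // => i _; rewrite mxE mul0r. Qed.

Lemma dot_ge0 n (v : 'cV[R]_n) : 0 <= dot v v.
Proof. by rewrite dotE sumr_ge0 // => i _; rewrite -expr2 sqr_ge0. Qed.

Lemma dot_eq0 n (v : 'cV[R]_n) : (dot v v == 0) = (v == 0).
Proof.
apply/idP/eqP => [|->]; last by rewrite dot0l.
rewrite dotE psumr_eq0 => [/allP v0|i _]; last by rewrite -expr2 sqr_ge0.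
apply/matrixP => i j; rewrite ord1 mxE.
by have /(_ (mem_index_enum i)) := v0 i; rewrite /= -expr2 sqrf_eq0 => /eqP.
Qed.

Lemma dot_gt0 n (v : 'cV[R]_n) : (0 < dot v v) = (v != 0).
Proof. by rewrite lt_def dot_ge0 dot_eq0 andbT. Qed.

Lemma dot_CauchySchwarz n (u v : 'cV[R]_n) : dot u v ^+ 2 <= dot u u * dot v v.
Proof.
have [->|u0] := eqVneq u 0; first by rewrite !dot0l expr0n /= mul0r.
have hu : 0 < dot u u by rewrite dot_gt0.
have := dot_ge0 (dot u u *: v - dot u v *: u).
rewrite !(dotDl, dotDr, dotZl, dotZr, dotNl, dotNr) (dotC v u) => h.
nra.
Qed.

End Dot.

Lemma qf1 (R : realType) n (u v : 'cV[R]_n) : qf u 1%:M v = dot u v.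
Proof. by rewrite /qf mulmx1. Qed.

Lemma nrm2E (R : realType) n (v : 'cV[R]_n) : nrm2 v = dot v v.
Proof. by []. Qed.

Lemma nrm_sqr (R : realType) n (v : 'cV[R]_n) : nrm v ^+ 2 = dot v v.
Proof. by rewrite sqr_sqrtr // dot_ge0. Qed.

Lemma nrmZ (R : realType) n k (v : 'cV[R]_n) : nrm (k *: v) = `|k| * nrm v.
Proof.
by rewrite /nrm nrm2E dotZl dotZr mulrA -expr2 sqrtrM ?sqr_ge0 // sqrtr_sqr.
Qed.

Ltac dot_expand := rewrite ?(dotDl, dotDr, dotZl, dotZr, dotNl, dotNr).

Lemma sqr_lt_sqrt (R : rcfType) (x k : R) :
  (x ^+ 2 < k) = (- Num.sqrt k < x < Num.sqrt k).
Proof.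
rewrite -ltr_norml -sqrtr_sqr; have [k0|k0] := lerP k 0.
  by rewrite (ler0_sqrtr k0) !ltNge sqrtr_ge0 (le_trans k0 (sqr_ge0 _)).
by rewrite ltr_sqrt.
Qed.

Lemma sqrt_le_mul_sqrt (R : rcfType) (u r D : R) : 0 <= r -> 0 <= D ->
  (Num.sqrt u <= r * Num.sqrt D) = (u <= r ^+ 2 * D).
Proof.
move=> r0 D0; rewrite -{1}(ger0_norm r0) -sqrtr_sqr -sqrtrM ?sqr_ge0 //.
by rewrite ler_sqrt // mulr_ge0 ?sqr_ge0.
Qed.

Lemma exists_span_same_norm_dot (R : rcfType) n (g a c : 'cV[R]_n) (t : R) :
  (forall p q : R, p *: g + q *: a = 0 -> p = 0 /\ q = 0) ->
  exists p q : R, let c' := p *: g + q *: a in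
    [/\ dot c' c' = dot c c, dot a c' = dot a c & t * (dot g c' - dot g c) <= 0].
Proof.
move=> indep; pose A := dot a a; pose B := dot a g.
have hA : 0 < A.
  rewrite dot_gt0; apply/eqP => a0.
  have /indep[_ /eqP] : 0 *: g + 1 *: a = 0 by rewrite a0 scale0r scaler0 addr0.
  by rewrite oner_eq0.
(* [c'] is [c0 + mu *: u], with [c0] the projection of [c] on [a] and [u] orthogonal
   to [a] in the span; Cauchy-Schwarz leaves the sign of [mu] free. *)
pose u := A *: g - B *: a.
have hu : 0 < dot u u.
  rewrite dot_gt0; apply/eqP => u0.
  have /indep[/eqP] : A *: g + (- B) *: a = 0 by rewrite scaleNr; exact: u0.
  by rewrite gt_eqF.
have au : dot a u = 0 by rewrite /u; dot_expand; rewrite -/A -/B; ring.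
pose c0 := (dot a c / A) *: a; pose w := c - c0.
have aw : dot a w = 0.
  by rewrite /w /c0; dot_expand; rewrite -/A; field; rewrite gt_eqF.
have c0w : dot c0 w = 0 by rewrite /c0 dotZl aw mulr0.
have c0u : dot c0 u = 0 by rewrite /c0 dotZl au mulr0.
have gw : dot g w = dot u w / A.
  by rewrite /u dotDl dotNl !dotZl aw mulr0 oppr0 addr0 mulrC mulKf ?gt_eqF.
have gu : dot g u = dot u u / A.
  by rewrite /u; dot_expand; rewrite -/A -/B (dotC g a) -/B; field; rewrite gt_eqF.
pose m := Num.sqrt (dot w w / dot u u).
have m0 : 0 <= m := sqrtr_ge0 _.
have m2 : m ^+ 2 * dot u u = dot w w.
  by rewrite sqr_sqrtr ?divr_ge0 ?dot_ge0 // divfK ?gt_eqF.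
have gw_le : `|dot g w| <= m * dot g u.
  rewrite gw gu normrM [`|A^-1|]gtr0_norm ?invr_gt0 // mulrA ler_pM2r ?invr_gt0 //.
  have := dot_CauchySchwarz u w; rewrite -m2 -(real_normK (num_real (dot u w))).
  have := normr_ge0 (dot u w); have := mulr_ge0 m0 (ltW hu); clearbody m; nra.
pose mu := if 0 <= t then - m else m.
have mu2 : mu ^+ 2 = m ^+ 2 by rewrite /mu; case: ifP; rewrite ?sqrrN.
exists (mu * A), (dot a c / A - mu * B) => c'.
have c'E : c' = c0 + mu *: u.
  by rewrite /c' /c0 /u scalerBr !scalerA scalerBl addrCA addrA.
have cE : c = c0 + w by rewrite /w addrC subrK.
clearbody c' u c0 w; subst c'; split; rewrite cE; dot_expand.
- rewrite c0u c0w (dotC u c0) c0u (dotC w c0) c0w -m2 -mu2; ring.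
- by rewrite au aw mulr0.
- rewrite opprD addrACA subrr add0r /mu; case: (lerP 0 t) => t0.
  + apply: mulr_ge0_le0 => //; rewrite subr_le0 mulNr lerNl.
    by rewrite (le_trans _ gw_le) // -normrN ler_norm.
  + apply: mulr_le0_ge0; first exact: ltW.
    by rewrite subr_ge0 (le_trans (ler_norm _) gw_le).
Qed.

(** * Quadratic forms of block covariance matrices *)

Section BlockForms.
Variable R : realType.

Lemma scalar_mx11_eq0 (x : R) : ((x%:M : 'cV[R]_1) == 0) = (x == 0).
Proof.
apply/eqP/eqP => [/matrixP/(_ 0 0)|->]; last by rewrite raddf0.
by rewrite !mxE eqxx mulr1n.
Qed.

Lemma trmx_mul_dot n (u w : 'cV[R]_n) : u^T *m w = (dot u w)%:M.
Proof. exact: mx11_scalar. Qed.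

Lemma dot_scalar (x y : R) : dot (x%:M : 'cV_1) y%:M = x * y.
Proof. by rewrite /dot tr_scalar_mx -scalar_mxM mxE eqxx mulr1n. Qed.

Lemma sum_tr_mul_dot n (u w : 'cV[R]_n) : \sum_j u^T 0 j * w j 0 = dot u w.
Proof. by rewrite /dot mxE. Qed.

Lemma qf_block_mx m n (u : 'cV[R]_m) (w : 'cV[R]_n) A B C D :
  qf (col_mx u w) (block_mx A B C D) (col_mx u w) =
  qf u A u + (u^T *m B *m w) 0 0 + (w^T *m C *m u) 0 0 + qf w D w.
Proof. by rewrite /qf tr_col_mx mul_row_block mul_row_col !mulmxDl !mxE; ring. Qed.

Lemma qf_scalar (x a : R) : qf (x%:M : 'cV_1) a%:M x%:M = x ^+ 2 * a.
Proof.
rewrite /qf tr_scalar_mx !mul_scalar_mx scale_scalar_mx !mxE big_ord1 !mxE /=.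
by rewrite mulr1n; ring.
Qed.

Lemma qf_block_col0 m n (w : 'cV[R]_n) (A : 'M[R]_m) B C D :
  qf (col_mx 0 w) (block_mx A B C D) (col_mx 0 w) = qf w D w.
Proof. by rewrite qf_block_mx /qf trmx0 !mul0mx mulmx0 !mxE add0r addr0 add0r. Qed.

Lemma posqf_unitmx n (A : 'M[R]_n) :
  (forall v, v != 0 -> 0 < qf v A v) -> A \in unitmx.
Proof.
move=> A_pos; rewrite unitmxE unitfE; apply/negP => /det0P [v v0 vA].
have := A_pos v^T; rewrite -(inj_eq (@trmx_inj _ _ _)) trmxK trmx0 => /(_ v0).
by rewrite /qf trmxK vA mul0mx mxE ltxx.
Qed.

Lemma posqf_block_col0 m n (A : 'M[R]_m) B C (D : 'M[R]_n) :
  (forall v, v != 0 -> 0 < qf v (block_mx A B C D) v) ->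
  forall w, w != 0 -> 0 < qf w D w.
Proof.
move=> pos w w0; rewrite -(qf_block_col0 _ A B C).
by apply: pos; rewrite col_mx_eq0 negb_and w0 orbT.
Qed.

Definition col3 n (tY tX : R) (tW : 'cV[R]_n) : 'cV[R]_(1 + (1 + n)) :=
  col_mx tY%:M (col_mx tX%:M tW).
Definition col4 n (tY tX : R) (tW : 'cV[R]_n) (t2 : R) : 'cV[R]_(1 + (1 + (n + 1))) :=
  col_mx tY%:M (col_mx tX%:M (col_mx tW t2%:M)).

Lemma col3_eq0 n tY tX (tW : 'cV[R]_n) :
  (col3 tY tX tW == 0) = [&& tY == 0, tX == 0 & tW == 0].
Proof. by rewrite /col3 !col_mx_eq0 !scalar_mx11_eq0. Qed.

Lemma col4_eq0 n tY tX (tW : 'cV[R]_n) t2 :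
  (col4 tY tX tW t2 == 0) = [&& tY == 0, tX == 0, tW == 0 & t2 == 0].
Proof. by rewrite /col4 !col_mx_eq0 !scalar_mx11_eq0. Qed.

Lemma col4_surj n (v : 'cV[R]_(1 + (1 + (n + 1)))) :
  exists tY tX tW t2, v = col4 tY tX tW t2.
Proof.
rewrite -(vsubmxK v) -(vsubmxK (dsubmx v)) -(vsubmxK (dsubmx (dsubmx v))).
rewrite (mx11_scalar (usubmx v)) (mx11_scalar (usubmx (dsubmx v))).
rewrite (mx11_scalar (dsubmx (dsubmx (dsubmx v)))).
by do 4 eexists.
Qed.

Variables (d : nat) (o : obsmom R d).

Lemma qf_fullcov (e : extmom R d) tY tX tW t2 :
  qf (col4 tY tX tW t2) (fullcov o e) (col4 tY tX tW t2) =
  tY ^+ 2 * vY o + tX ^+ 2 * vX o + qf tW (SW o) tW + t2 ^+ 2 * v2 e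
  + 2 * tY * tX * cXY o + 2 * tY * dot (sWY o) tW + 2 * tY * t2 * sY2 e
  + 2 * tX * dot (sWX o) tW + 2 * tX * t2 * sX2 e + 2 * t2 * dot (cW e) tW.
Proof.
rewrite /fullcov /regcov /regYcov /wcov /wXcov !qf_block_mx !qf_scalar.
rewrite !tr_col_mx !tr_scalar_mx !mul_scalar_mx -!scalemxAl !mul_row_col !mulmxDl.
rewrite !mul_mx_scalar ?mul_scalar_mx ?scalar_mxM !mxE /= !mulr1n !sum_tr_mul_dot.
by rewrite !(dotC tW); ring.
Qed.

Lemma qf_obscov tY tX tW :
  qf (col3 tY tX tW) (obscov o) (col3 tY tX tW) =
  tY ^+ 2 * vY o + tX ^+ 2 * vX o + qf tW (SW o) tW
  + 2 * tY * tX * cXY o + 2 * tY * dot (sWY o) tW + 2 * tX * dot (sWX o) tW.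
Proof.
rewrite /obscov !qf_block_mx !qf_scalar.
rewrite !tr_col_mx ?tr_row_mx !tr_scalar_mx ?trmxK !mul_scalar_mx -!scalemxAl.
rewrite !mul_row_col !mulmxDl !mul_mx_scalar ?mul_scalar_mx ?scalar_mxM.
by rewrite !mxE /= !mulr1n !sum_tr_mul_dot !(dotC tW); ring.
Qed.

End BlockForms.

(** * Extensions of the observed moments *)

Section Normalized.
Variables (R : realType) (d : nat) (o : obsmom R d).
Hypotheses (vX1 : vX o = 1) (SW1 : SW o = 1%:M).
Implicit Types (z y b rX rY : R) (c : 'cV[R]_d).

Definition sperp (c : 'cV[R]_d) := Num.sqrt (1 - dot c c).

(* With [var W2 = 1] and [cov(W1, W2) = c], [sperp c] is the standard deviation
   of [W2^{perp W1}], and [z], [y] are the covariances of [X], [Y] with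
   [W2^{perp W1} / sperp c]. *)
Definition ext_of (c : 'cV[R]_d) (z y : R) : extmom R d :=
  Ext (dot (sWY o) c + sperp c * y) (dot (sWX o) c + sperp c * z) c 1.

Definition beta_long_of (z y : R) := (k1 o - z * y) / (k0 o - z ^+ 2).
Definition resvarY (z y : R) :=
  vY o - dot (sWY o) (sWY o) - y ^+ 2 - beta_long_of z y ^+ 2 * (k0 o - z ^+ 2).
Definition gamma2_of (c : 'cV[R]_d) (z y : R) := (y - z * beta_long_of z y) / sperp c.

Lemma k0E : k0 o = 1 - dot (sWX o) (sWX o).
Proof. by rewrite /k0 vX1 SW1 invmx1 qf1. Qed.

Lemma k1E : k1 o = cXY o - dot (sWX o) (sWY o).
Proof. by rewrite /k1 SW1 invmx1 qf1. Qed.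

Lemma sperp_gt0 c : dot c c < 1 -> 0 < sperp c.
Proof. by move=> c1; rewrite sqrtr_gt0 subr_gt0. Qed.

Lemma dot_sperpE c : dot c c <= 1 -> dot c c = 1 - sperp c ^+ 2.
Proof. by move=> c1; rewrite sqr_sqrtr ?subr_ge0 // opprB addrC subrK. Qed.

Lemma qf_fullcov_ext_of c z y tY tX tW t2 : dot c c <= 1 ->
  qf (col4 tY tX tW t2) (fullcov o (ext_of c z y)) (col4 tY tX tW t2) =
  let w := tW + tX *: sWX o + tY *: sWY o + t2 *: c in
  dot w w + (sperp c * t2 + z * tX + y * tY) ^+ 2 + ((k0 o - z ^+ 2) * tX ^+ 2
  + 2 * (k1 o - z * y) * tX * tY + (vY o - dot (sWY o) (sWY o) - y ^+ 2) * tY ^+ 2).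
Proof.
move=> c1; rewrite qf_fullcov k0E k1E vX1 SW1 qf1 /=; dot_expand.
rewrite !(dotC tW) !(dotC c (sWX o)) !(dotC c (sWY o)) (dotC (sWY o) (sWX o)).
by rewrite (dot_sperpE c1); ring.
Qed.

Lemma fullcov_sym e : (fullcov o e)^T = fullcov o e.
Proof. by rewrite /fullcov /regcov /wcov !tr_block_mx !tr_scalar_mx !trmxK SW1 trmx1. Qed.

Lemma posdef_ext_of c z y : dot c c < 1 -> z ^+ 2 < k0 o -> 0 < resvarY z y ->
  posdef (fullcov o (ext_of c z y)).
Proof.
move=> c1 zk0 resY; split; first exact: fullcov_sym.
move=> v; have [tY [tX [tW [t2 ->]]]] := col4_surj v.
rewrite col4_eq0 qf_fullcov_ext_of ?ltW //= => v0.
have hs := sperp_gt0 c1.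
have -> : (k0 o - z ^+ 2) * tX ^+ 2 + 2 * (k1 o - z * y) * tX * tY
   + (vY o - dot (sWY o) (sWY o) - y ^+ 2) * tY ^+ 2 =
   (k0 o - z ^+ 2) * (tX + beta_long_of z y * tY) ^+ 2 + resvarY z y * tY ^+ 2.
  by rewrite /resvarY /beta_long_of; field; rewrite subr_eq0 gt_eqF.
set w := tW + _ + _ + _; set sX := tX + _; set s2 := sperp c * t2 + _ + _.
have kz : 0 < k0 o - z ^+ 2 by rewrite subr_gt0.
have w0 := dot_ge0 w; have s20 := sqr_ge0 s2.
have sX0 := mulr_ge0 (ltW kz) (sqr_ge0 sX); have tY20 := mulr_ge0 (ltW resY) (sqr_ge0 tY).
have [tY0|tY0] := eqVneq tY 0; last first.
  have : 0 < resvarY z y * tY ^+ 2 by rewrite pmulr_rgt0 // exprn_even_gt0.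
  lra.
have [tX0|tX0] := eqVneq tX 0; last first.
  have : 0 < (k0 o - z ^+ 2) * sX ^+ 2.
    by rewrite pmulr_rgt0 // exprn_even_gt0 // /sX tY0 mulr0 addr0.
  lra.
have [t20|t20] := eqVneq t2 0; last first.
  have : 0 < s2 ^+ 2.
    by rewrite /s2 tY0 tX0 !mulr0 !addr0 exprn_even_gt0 //= mulf_neq0 // gt_eqF.
  lra.
move: v0; rewrite tY0 tX0 t20 !eqxx andbT /= => tW0.
have : 0 < dot w w by rewrite dot_gt0 /w tY0 tX0 t20 !scale0r !addr0.
lra.
Qed.

Lemma posdef_fullcov_unitmx e : posdef (fullcov o e) ->
  regcov o e \in unitmx /\ wcov o e \in unitmx.
Proof.
move=> [_ pos]; have pos_reg := posqf_block_col0 pos.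
by split; apply: posqf_unitmx => //; apply: posqf_block_col0 pos_reg.
Qed.

Lemma pi_ext_of c z y : dot c c < 1 -> posdef (fullcov o (ext_of c z y)) ->
  pi1 o (ext_of c z y) = sWX o - (z / sperp c) *: c /\
  pi2 o (ext_of c z y) = z / sperp c.
Proof.
move=> c1 /posdef_fullcov_unitmx[_ wcov_unit]; have hs := sperp_gt0 c1.
rewrite /pi1 /pi2 /picoef /lpcoef.
suff -> : invmx (wcov o (ext_of c z y)) *m wXcov o (ext_of c z y) =
          col_mx (sWX o - (z / sperp c) *: c) (z / sperp c)%:M.
  by rewrite col_mxKu col_mxKd mxE eqxx mulr1n.
apply: (canLR (mulKmx wcov_unit)).
rewrite /wcov /wXcov /= mul_block_col SW1 !mul1mx mul_mx_scalar trmx_mul_dot subrK.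
congr col_mx; rewrite -raddfD; congr (_%:M).
dot_expand; rewrite (dotC c) (dot_sperpE (ltW c1)); field; lra.
Qed.

Lemma long_ext_of c z y : dot c c < 1 -> z ^+ 2 < k0 o ->
  posdef (fullcov o (ext_of c z y)) ->
  [/\ beta_long o (ext_of c z y) = beta_long_of z y,
      gamma1 o (ext_of c z y) = sWY o - beta_long_of z y *: sWX o - gamma2_of c z y *: c &
      gamma2 o (ext_of c z y) = gamma2_of c z y].
Proof.
move=> c1 zk0 /posdef_fullcov_unitmx[regcov_unit _]; have hs := sperp_gt0 c1.
rewrite /beta_long /gamma1 /gamma2 /longcoef /lpcoef.
suff -> : invmx (regcov o (ext_of c z y)) *m regYcov o (ext_of c z y) =
  col_mx (beta_long_of z y)%:M
    (col_mx (sWY o - beta_long_of z y *: sWX o - gamma2_of c z y *: c)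
            (gamma2_of c z y)%:M).
  by rewrite !(col_mxKu, col_mxKd) !mxE !eqxx !mulr1n.
apply: (canLR (mulKmx regcov_unit)).
rewrite /regcov /wcov /wXcov /regYcov /= !mul_block_col SW1 !mul1mx !mul_mx_scalar.
rewrite tr_col_mx mul_row_col !trmx_mul_dot dot_scalar scale_col_mx add_col_mx.
rewrite scale_scalar_mx subrK.
have k0z : k0 o - z ^+ 2 != 0 by rewrite subr_eq0 gt_eqF.
congr col_mx.
  rewrite -!raddfD; congr (_%:M); dot_expand.
  by rewrite /gamma2_of /beta_long_of k0E k1E vX1 in k0z *; field; rewrite k0z gt_eqF.
congr col_mx; first by rewrite addrC subrK.
rewrite scale_scalar_mx -!raddfD; congr (_%:M); dot_expand.
rewrite /gamma2_of /beta_long_of (dot_sperpE (ltW c1)) !(dotC c).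
by field; rewrite k0z gt_eqF.
Qed.

Lemma RW2W1_ext_of c z y : RW2W1 o (ext_of c z y) = nrm c.
Proof. by rewrite /RW2W1 SW1 invmx1 qf1 /= divr1. Qed.

(* The three test vectors encode the residuals [W2 - c'W1], [X - pi'(W1, W2)]
   and [Y - beta_long X - gamma'(W1, W2)], whose variances must be positive. *)
Lemma ext_of_posdef e : v2 e = 1 -> posdef (fullcov o e) ->
  exists z y, [/\ e = ext_of (cW e) z y, dot (cW e) (cW e) < 1,
                  z ^+ 2 < k0 o & 0 < resvarY z y].
Proof.
case: e => sy sx c v2 /= -> [_ pos].
have c1 : dot c c < 1.
  have /pos : col4 0 0 (- c) 1 != 0 by rewrite col4_eq0 oner_eq0 !andbF.
  by rewrite qf_fullcov vX1 SW1 qf1 /=; dot_expand; lra.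
have hs := sperp_gt0 c1.
set z := (sx - dot (sWX o) c) / sperp c; set y := (sy - dot (sWY o) c) / sperp c.
have eE : Ext sy sx c 1 = ext_of c z y.
  by rewrite /ext_of /z /y; congr Ext; rewrite mulrC divfK ?gt_eqF // addrC subrK.
rewrite eE in pos.
have zk0 : z ^+ 2 < k0 o.
  pose v := col4 0 1 (- (sWX o - (z / sperp c) *: c)) (- (z / sperp c)).
  rewrite -subr_gt0 (_ : _ - _ = qf v (fullcov o (ext_of c z y)) v).
    by apply: pos; rewrite col4_eq0 oner_eq0 andbF.
  by rewrite qf_fullcov_ext_of ?ltW //=; dot_expand; field; rewrite gt_eqF.
exists z, y; split => //.
pose g2 := gamma2_of c z y; pose b := beta_long_of z y.
pose v := col4 1 (- b) (- (sWY o - b *: sWX o - g2 *: c)) (- g2).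
rewrite (_ : resvarY z y = qf v (fullcov o (ext_of c z y)) v).
  by apply: pos; rewrite col4_eq0 oner_eq0.
rewrite qf_fullcov_ext_of ?ltW //= /resvarY /g2 /gamma2_of /b /beta_long_of; dot_expand.
by field; rewrite subr_eq0 !gt_eqF.
Qed.

Hypothesis obs_pd : posdef (obscov o).

Lemma k0_gt0 : 0 < k0 o.
Proof.
have [_ /(_ (col3 0 1 (- sWX o)))] := obs_pd.
rewrite col3_eq0 oner_eq0 andbF => /(_ isT).
by rewrite qf_obscov k0E vX1 SW1 qf1; dot_expand; lra.
Qed.

Lemma xwcov_coef :
  invmx (xwcov o) *m xwYcov o = col_mx (k1 o / k0 o)%:M (sWY o - (k1 o / k0 o) *: sWX o).
Proof.
have [_ pos] := obs_pd; have k0_neq0 := lt0r_neq0 k0_gt0.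
apply: (canLR (mulKmx (posqf_unitmx (posqf_block_col0 pos)))).
rewrite /xwcov /xwYcov mul_block_col vX1 SW1 !mul1mx trmx_mul_dot !mul_mx_scalar.
congr col_mx; last by rewrite addrC subrK.
rewrite -raddfD; congr (_%:M).
by dot_expand; rewrite k1E; rewrite k0E in k0_neq0 *; field.
Qed.

Lemma beta_medE : beta_med o = k1 o / k0 o.
Proof. by rewrite /beta_med /lpcoef xwcov_coef col_mxKu mxE eqxx mulr1n. Qed.

Lemma varYperpE : varYperp o = vY o - dot (sWY o) (sWY o) - k1 o ^+ 2 / k0 o.
Proof.
have k0_neq0 := lt0r_neq0 k0_gt0.
rewrite /varYperp /qf -mulmxA xwcov_coef /xwYcov tr_col_mx mul_row_col.
rewrite tr_scalar_mx -scalar_mxM trmx_mul_dot -raddfD mxE eqxx mulr1n.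
by dot_expand; rewrite k1E (dotC (sWY o)); field.
Qed.

Lemma varYperp_gt0 : 0 < varYperp o.
Proof.
have [_ pos] := obs_pd; have k0_neq0 := lt0r_neq0 k0_gt0.
pose bm := k1 o / k0 o; pose v := col3 1 (- bm) (bm *: sWX o - sWY o).
rewrite (_ : varYperp o = qf v (obscov o) v).
  by apply: pos; rewrite col3_eq0 oner_eq0.
rewrite qf_obscov varYperpE vX1 SW1 qf1 /bm; dot_expand.
by rewrite k1E (dotC (sWY o)); rewrite k0E in k0_neq0 *; field.
Qed.

Lemma devsq_sub_beta_long_of z y : z ^+ 2 < k0 o ->
  devsq o z - (beta_long_of z y - beta_med o) ^+ 2 =
  resvarY z y * (z ^+ 2 / (k0 o * (k0 o - z ^+ 2))).
Proof.
move=> zk0; have := k0_gt0; rewrite /devsq varYperpE beta_medE /resvarY /beta_long_of.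
by move=> k0_pos; field; rewrite subr_eq0 !gt_eqF.
Qed.

Lemma resvarY_gt0E z y : z ^+ 2 < k0 o -> z != 0 ->
  (0 < resvarY z y) = ((beta_long_of z y - beta_med o) ^+ 2 < devsq o z).
Proof.
move=> zk0 z0; rewrite -[_ < devsq o z]subr_gt0 devsq_sub_beta_long_of // pmulr_lgt0 //.
by rewrite divr_gt0 ?exprn_even_gt0 ?mulr_gt0 ?k0_gt0 ?subr_gt0.
Qed.

Lemma beta_long_of0 y : beta_long_of 0 y = beta_med o.
Proof. by rewrite beta_medE /beta_long_of !mul0r expr0n /= !subr0. Qed.

Lemma beta_long_of_solve z b : z != 0 -> z ^+ 2 < k0 o ->
  beta_long_of z ((k1 o - b * k0 o + b * z ^+ 2) / z) = b.
Proof. by move=> z0 zk0; rewrite /beta_long_of; field; rewrite z0 subr_eq0 gt_eqF. Qed.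

Lemma k1_sub_beta_long_of c z y : dot c c < 1 -> z ^+ 2 < k0 o ->
  k1 o - beta_long_of z y * k0 o = z * sperp c * gamma2_of c z y.
Proof.
move=> c1 zk0; have := sperp_gt0 c1.
by rewrite /gamma2_of /beta_long_of => s_pos; field; rewrite subr_eq0 !gt_eqF.
Qed.

Lemma vfun_ext_of c z y : dot c c < 1 -> z ^+ 2 < k0 o ->
  vfun o z c (beta_long_of z y) =
  (z * sperp c) *: (sWY o - beta_long_of z y *: sWX o - gamma2_of c z y *: c).
Proof.
move=> c1 zk0; rewrite /vfun /nrm sqr_sqrtr ?dot_ge0 // nrm2E -/(sperp c).
rewrite (k1_sub_beta_long_of y c1 zk0).
by rewrite !scalerBr !scalerA.
Qed.

Lemma pfun_ext_of c z rX : dot c c < 1 ->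
  pfun o z c rX =
  rX ^+ 2 * (sperp c ^+ 2 * nrm2 (sWX o - (z / sperp c) *: c)) - z ^+ 2.
Proof.
move=> c1; have s_neq0 := lt0r_neq0 (sperp_gt0 c1).
rewrite /pfun /nrm sqr_sqrtr ?dot_ge0 // !nrm2E -/(sperp c).
rewrite (_ : sperp c *: sWX o - z *: c = sperp c *: (sWX o - (z / sperp c) *: c)).
  by rewrite dotZl dotZr mulrA -expr2.
by rewrite scalerBr scalerA mulrC divfK.
Qed.

Lemma pfun_eq z c c' rX : dot c' c' = dot c c -> dot (sWX o) c' = dot (sWX o) c ->
  pfun o z c' rX = pfun o z c rX.
Proof.
move=> cc' Xc'; rewrite /pfun /nrm !sqr_sqrtr ?dot_ge0 // !nrm2E cc'.
by dot_expand; rewrite !(dotC c) !(dotC c') cc' Xc'.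
Qed.

Lemma A_rx_ext_of c z y rX : 0 <= rX -> dot c c < 1 ->
  posdef (fullcov o (ext_of c z y)) ->
  A_rx o (ext_of c z y) rX <-> 0 <= pfun o z c rX.
Proof.
move=> rX0 c1 pd; rewrite /A_rx; have [-> ->] := pi_ext_of c1 pd.
have s_pos := sperp_gt0 c1.
rewrite SW1 qf1 /= mulr1 sqrt_le_mul_sqrt ?dot_ge0 // pfun_ext_of // subr_ge0.
by rewrite nrm2E expr_div_n ler_pdivrMr ?exprn_gt0 // -mulrA [_ * sperp c ^+ 2]mulrC.
Qed.

Lemma A_ry_ext_of c z y rY : dot c c < 1 -> z ^+ 2 < k0 o -> z != 0 ->
  beta_long_of z y != beta_med o -> posdef (fullcov o (ext_of c z y)) ->
  A_ry o (ext_of c z y) rY <-> (rY_low o z c (beta_long_of z y) <= rY%:E)%E.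
Proof.
move=> c1 zk0 z0 bmed pd; rewrite /A_ry; have [_ -> ->] := long_ext_of c1 zk0 pd.
have zs0 : z * sperp c != 0 := mulf_neq0 z0 (lt0r_neq0 (sperp_gt0 c1)).
have g2_0 : gamma2_of c z y != 0.
  apply: contra_neq bmed => g2_0.
  have /eqP : k1 o - beta_long_of z y * k0 o = 0.
    by rewrite (k1_sub_beta_long_of y c1 zk0) g2_0 mulr0.
  by rewrite beta_medE subr_eq0 => /eqP ->; rewrite mulfK // lt0r_neq0 // k0_gt0.
rewrite /rY_low vfun_ext_of // (k1_sub_beta_long_of y c1 zk0) SW1 qf1 /= mulr1 sqrtr_sqr.
set g1 := sWY o - _ - _; change (Num.sqrt (dot g1 g1)) with (nrm g1).
have [->|g1_0] := eqVneq g1 0.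
  rewrite scaler0 eqxx /nrm nrm2E dot0l sqrtr0 mulr0 normr_le0 (negPf g2_0).
  by rewrite leye_eq.
have n_pos : 0 < nrm g1 by rewrite sqrtr_gt0 nrm2E dot_gt0.
rewrite scaler_eq0 negb_or zs0 g1_0 lee_fin nrmZ [`|z * sperp c * _|]normrM.
rewrite -mulf_div divff ?normr_eq0 //.
by rewrite mul1r ler_pdivrMr.
Qed.

Lemma nrm2_vfun_le z b c c' : dot c' c' = dot c c -> dot (sWX o) c' = dot (sWX o) c ->
  z * (k1 o - b * k0 o) * (dot (sWY o) c' - dot (sWY o) c) <= 0 ->
  nrm2 (vfun o z c b) <= nrm2 (vfun o z c' b).
Proof.
move=> cc' Xc' Yc'; rewrite /vfun /nrm !sqr_sqrtr ?dot_ge0 // !nrm2E cc'.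
have s0 : 0 <= Num.sqrt (1 - dot c c) := sqrtr_ge0 _.
dot_expand; rewrite !(dotC c) !(dotC c') cc' Xc'.
have := mulr_ge0_le0 s0 Yc'; nra.
Qed.

Lemma rY_low_le z c c' b : nrm2 (vfun o z c b) <= nrm2 (vfun o z c' b) ->
  (rY_low o z c' b <= rY_low o z c b)%E.
Proof.
move=> le_v; rewrite /rY_low.
have [v0|v_neq0] := eqVneq (vfun o z c b) 0; first by rewrite leey.
have v_pos : 0 < nrm2 (vfun o z c b) by rewrite nrm2E dot_gt0.
have v'_neq0 : vfun o z c' b != 0 by rewrite -dot_gt0 -nrm2E (lt_le_trans v_pos).
have v'_pos := lt_le_trans v_pos le_v.
rewrite v'_neq0 lee_fin ler_wpM2l // lef_pV2 ?posrE ?sqrtr_gt0 //.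
by rewrite /nrm ler_sqrt // ltW.
Qed.

Lemma rY_bf_eq0 rX cl cu bl : sWX o != 0 -> 0 <= rX -> 0 <= cl <= cu -> cl < 1 ->
  beta_med o <= bl -> rY_bf o rX cl cu bl = 0%:E.
Proof.
move=> X0 rX0 /andP[cl0 clu] cl1 bmbl; apply/eqP; rewrite eq_le.
apply/andP; split; last by apply: le_ereal_inf_tmp => _ [r [r0 _] <-]; rewrite lee_fin.
apply: ereal_inf_lbound; exists 0 => //; split => //; exists (beta_med o); split => //.
have X_pos : 0 < nrm (sWX o) by rewrite sqrtr_gt0 nrm2E dot_gt0.
pose c := (cl / nrm (sWX o)) *: sWX o.
have nc : nrm c = cl.
  by rewrite nrmZ ger0_norm ?divr_ge0 ?(ltW X_pos) // divfK ?gt_eqF.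
have c1 : dot c c < 1 by rewrite -nrm_sqr nc; nra.
have resY : 0 < resvarY 0 0.
  rewrite (_ : resvarY 0 0 = varYperp o) ?varYperp_gt0 //.
  rewrite /resvarY beta_long_of0 beta_medE varYperpE expr0n /= subr0 subr0.
  by have := lt0r_neq0 k0_gt0 => k0_neq0; field.
have zk0 : 0 ^+ 2 < k0 o by rewrite expr0n k0_gt0.
have pd := posdef_ext_of c1 zk0 resY; have [bE _ g2E] := long_ext_of c1 zk0 pd.
exists (ext_of c 0 0); split => //; split => //; split; last split; last split.
- apply/A_rx_ext_of => //.
  by rewrite /pfun expr0n subr0; apply: mulr_ge0; [exact: sqr_ge0 | exact: dot_ge0].
- by rewrite /A_ry g2E /gamma2_of mul0r subrr mul0r expr0n /= !mul0r sqrtr0.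
- by rewrite /A_c RW2W1_ext_of nc lexx clu.
- by rewrite bE beta_long_of0.
Qed.

Lemma rY_bf_le_opt rX cl cu bl : 0 <= rX -> bl < beta_med o ->
  (rY_bf o rX cl cu bl <= rY_opt o rX cl cu bl)%E.
Proof.
move=> rX0 blm; apply: le_ereal_inf_tmp => x [z [c1 [c2 [b /= [zk bbl pX dev]]]]].
move=> [/andP[clc ccu] c_1 ->].
set c := c1 *: sWY o + c2 *: sWX o in pX dev clc ccu c_1 *.
rewrite /rY_low; case: ifPn => v0; last by rewrite leey.
have cc1 : dot c c < 1 by rewrite -nrm_sqr expr_lt1 ?sqrtr_ge0.
have zk0 : z ^+ 2 < k0 o by rewrite sqr_lt_sqrt.
have z0 : z != 0.
  by apply: contraTneq dev => ->; rewrite /devsq expr0n /= mul0r mulr0 -leNgt sqr_ge0.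
pose y := (k1 o - b * k0 o + b * z ^+ 2) / z.
have bE : beta_long_of z y = b by exact: beta_long_of_solve.
have resY : 0 < resvarY z y by rewrite resvarY_gt0E // bE.
have pd := posdef_ext_of cc1 zk0 resY; have [blE _ _] := long_ext_of cc1 zk0 pd.
have bm : beta_long_of z y != beta_med o by rewrite bE lt_eqF // (le_lt_trans bbl).
apply: ereal_inf_lbound; exists (`|k1 o - b * k0 o| / nrm (vfun o z c b)) => //.
split; first by rewrite divr_ge0 ?sqrtr_ge0.
exists b; split => //; exists (ext_of c z y); split => //; split => //.
split; first exact/A_rx_ext_of.
split; first by apply/A_ry_ext_of => //; rewrite bE /rY_low v0.
by split; [rewrite /A_c RW2W1_ext_of clc ccu | rewrite blE].
Qed.

Lemma rY_opt_le_bf rX cl cu bl :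
  (forall a b : R, a *: sWY o + b *: sWX o = 0 -> a = 0 /\ b = 0) ->
  0 <= rX -> bl < beta_med o -> (rY_opt o rX cl cu bl <= rY_bf o rX cl cu bl)%E.
Proof.
move=> indep rX0 blm.
apply: le_ereal_inf_tmp => _ [r [_ [b [bbl [e [v21 [pd [Ax [Ay [Ac bE]]]]]]]]] <-].
subst b.
have [z [y [eE cc1 zk0 resY]]] := ext_of_posdef v21 pd.
move: pd Ax Ay Ac bbl; rewrite eE; set c := cW e => pd Ax Ay Ac.
have [-> _ _] := long_ext_of cc1 zk0 pd => bbl.
have bm : beta_long_of z y != beta_med o by rewrite lt_eqF // (le_lt_trans bbl).
have z0 : z != 0 by apply: contra_neq bm => ->; rewrite beta_long_of0.
have [c1' [c2' [cc' Xc' Yc']]] :=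
  exists_span_same_norm_dot c (z * (k1 o - beta_long_of z y * k0 o)) indep.
set c' := c1' *: sWY o + c2' *: sWX o in cc' Xc' Yc'.
have nc' : nrm c' = nrm c by rewrite /nrm !nrm2E cc'.
apply: (@le_trans _ _ (rY_low o z c' (beta_long_of z y))).
  apply: ereal_inf_lbound; exists z, c1', c2', (beta_long_of z y).
  rewrite /= -/c'; split => //.
  - by rewrite -sqr_lt_sqrt.
  - by rewrite (pfun_eq _ _ cc' Xc'); apply/(A_rx_ext_of rX0 cc1 pd).
  - by rewrite -(resvarY_gt0E y zk0 z0).
  - split => //; first by rewrite nc' -(RW2W1_ext_of c z y).
    by rewrite nc' -sqrtr1 ltr_sqrt ?ltr01.
apply: le_trans (rY_low_le (nrm2_vfun_le cc' Xc' Yc')) _.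
exact/A_ry_ext_of.
Qed.

End Normalized.

Lemma rY_bf_eq_pinfty (R : realType) d (o : obsmom R d) rX cl cu bl :
  (bl%:E < B_low o rX cl cu)%E -> rY_bf o rX cl cu bl = +oo%E.
Proof.
move=> blB; apply/eqP; rewrite eq_le leey /=.
apply: le_ereal_inf_tmp => _ [r [_ [b [bbl [e [v21 [pd [Ax [_ [Ac bE]]]]]]]]] <-].
have : (B_low o rX cl cu <= b%:E)%E by apply: ereal_inf_lbound; exists b => //; exists e.
by move=> /(lt_le_trans blB); rewrite lte_fin ltNge bbl.
Qed.

Theorem mainTheorem3 (R : realType) (d : nat) (o : obsmom R d) (rX cl cu bl : R) :
  (2 <= d)%N ->
  posdef (obscov o) ->
  sWX o != 0 ->
  vX o = 1 -> SW o = 1%:M ->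
  (forall a b : R, a *: sWY o + b *: sWX o = 0 -> a = 0 /\ b = 0) ->
  0 <= rX ->
  0 <= cl -> cl <= cu -> cu <= 1 -> cl < 1 ->
  [/\ beta_med o <= bl -> rY_bf o rX cl cu bl = (0%:E)%E,
      (bl%:E < B_low o rX cl cu)%E -> rY_bf o rX cl cu bl = +oo%E
    & (B_low o rX cl cu <= bl%:E)%E -> bl < beta_med o ->
        rY_bf o rX cl cu bl = rY_opt o rX cl cu bl].
Proof.
(* [2 <= d] is implied by the linear independence of [sWY o] and [sWX o]. *)
move=> _ obs_pd X0 vX1 SW1 indep rX0 cl0 clu _ cl1; split.
- by apply: rY_bf_eq0; rewrite ?cl0.
- exact: rY_bf_eq_pinfty.
- move=> _ blm; apply/eqP; rewrite eq_le.
  by rewrite rY_bf_le_opt ?rY_opt_le_bf.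
Qed.
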